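(* Let $(\delta_\nu)_{\nu\geqslant 0}$ be a sequence of positive numbers with $\delta_\nu\to 0$. Suppose $(n_\nu)_{\nu\geqslant 0}$ is a strictly increasing sequence of positive integers and $(a_\nu)_{\nu\geqslant 0}$ a sequence of integers with $1\leqslant a_\nu<F_{n_\nu}$ and $\gcd(a_\nu,F_{n_\nu})=1$, such that, writing $$\alpha_\nu=\frac{a_\nu}{F_{n_\nu}},\quad \beta_\nu=\left\{\frac{F_{n_\nu-1}a_\nu}{F_{n_\nu}}\right\},\quad I_\nu=\left[\alpha_\nu,\alpha_\nu+\frac{\delta_\nu}{F_{n_\nu}^2}\right],\quad J_\nu=\left[\beta_\nu,\beta_\nu+\frac{\delta_\nu}{F_{n_\nu}^2}\right],$$ one has $I_{\nu+1}\subset I_\nu$ and $J_{\nu+1}\subset J_\nu$ for all $\nu$. Let $\alpha$ and $\beta$ be the real numbers with $\{\alpha\}=\bigcap_\nu I_\nu$ and $\{\beta\}=\bigcap_\nu J_\nu$ (as sets). Then $$\limsup_{Q\to\infty}\, Q\left(\min_{x\in\mathbb{Z},\,1\leqslant x<Q}\|\alpha x\|\cdot\|\beta x\|\right)\geqslant \frac{2}{3+\sqrt5}=0.381966\ldots$$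
   Context: $F_n$ denotes the $n$-th Fibonacci number ($F_1=F_2=1$, $F_{n+1}=F_n+F_{n-1}$). For a real $t$, $\{t\}$ is its fractional part and $\|t\|$ is the distance from $t$ to the nearest integer. (Such sequences exist: they are built inductively, choosing $n_{\nu+1}$ large enough and $a_{\nu+1}$ so that the nested-interval conditions hold.) *)

From Stdlib Require Import Reals Lra Lia ZArith List.
From Coquelicot Require Import Coquelicot.
Open Scope R_scope.

Fixpoint fib (n : nat) : nat :=
  match n with
  | O => O
  | S m => match m with
           | O => 1%nat
           | S k => (fib m + fib k)%nat
           end
  end.

Definition frac (t : R) : R := t - IZR (Int_part t).

Definition dist_Z (t : R) : R := Rmin (frac t) (1 - frac t).

(* min_{x in Z, 1 <= x < Q} ||alpha x|| * ||beta x||.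
   For Q <= 1 the range is empty; we then return the x = 1 value
   (irrelevant for the limsup, which ignores finitely many terms). *)
Definition prod_dist (alpha beta : R) (x : nat) : R :=
  dist_Z (alpha * INR x) * dist_Z (beta * INR x).

Definition min_prod (alpha beta : R) (Q : nat) : R :=
  fold_right Rmin (prod_dist alpha beta 1) (map (prod_dist alpha beta) (seq 1 (Q - 1))).

Definition in_Icc (c l x : R) : Prop := c <= x <= c + l.

(* Let q = F_{n_nu}, so that alpha lies within delta/q^2 above a/q and beta within
   delta/q^2 above {F_{n_nu - 1} a / q}.  For 1 <= x < q, clearing denominators gives
   q ||alpha x|| >= (1 - delta) |t| and q ||beta x|| >= (1 - delta) |s| with integers
   t = a x (mod q), s = F_{n_nu - 1} t (mod q), and t <> 0 because gcd(a, q) = 1.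
   Writing (t, w) in the unimodular basis given by Cassini's identity and using
   d'Ocagne's identity shows |t| |F_{k+1} t - w F_{k+2}| >= F_k whenever
   0 < |t| < F_{k+2}.  Hence q * min_{x<q} ||alpha x|| ||beta x|| >= (1 - delta)^2 F_k / F_{k+2},
   and Cassini again gives F_k / F_{k+2} >= (3 - sqrt 5)/2 - 1/F_{k+2}^2, where
   (3 - sqrt 5)/2 = 2/(3 + sqrt 5). *)

From Stdlib Require Import Reals Lra Lia ZArith List Psatz.
From Coquelicot Require Import Coquelicot.
Open Scope R_scope.

Definition fibZ (k : nat) : Z := Z.of_nat (fib k).

Lemma fibZ_SS k : fibZ (S (S k)) = (fibZ (S k) + fibZ k)%Z.
Proof. unfold fibZ; change (fib (S (S k))) with (fib (S k) + fib k)%nat; lia. Qed.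

Lemma fibZ_nonneg k : (0 <= fibZ k)%Z.
Proof. unfold fibZ; lia. Qed.

Lemma fibZ_S_pos k : (1 <= fibZ (S k))%Z.
Proof.
  induction k as [|k IH]; [reflexivity|].
  rewrite fibZ_SS; pose proof (fibZ_nonneg k); lia.
Qed.

Lemma fibZ_le_S k : (fibZ k <= fibZ (S k))%Z.
Proof.
  destruct k as [|k]; [apply fibZ_nonneg|].
  rewrite fibZ_SS; pose proof (fibZ_nonneg k); lia.
Qed.

Lemma le_fib_S k : (k <= fib (S k))%nat.
Proof.
  enough (H : (k <= fib (S k) /\ S k <= fib (S (S k)))%nat) by apply H.
  induction k as [|k [IH1 IH2]]; [simpl; lia|].
  split; [exact IH2|].
  change (fib (S (S (S k)))) with (fib (S (S k)) + fib (S k))%nat.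
  pose proof (fibZ_S_pos k); unfold fibZ in *; lia.
Qed.

Lemma INR_fib k : INR (fib k) = IZR (fibZ k).
Proof. apply INR_IZR_INZ. Qed.

Lemma fib_docagne i j :
  (fibZ (S i) * fibZ (i + j) - fibZ i * fibZ (S (i + j)) = (-1) ^ Z.of_nat i * fibZ j)%Z.
Proof.
  induction i as [|i IH].
  - simpl; unfold fibZ at 1 2; simpl; ring.
  - change (S i + j)%nat with (S (i + j)).
    rewrite Nat2Z.inj_succ, Z.pow_succ_r, !fibZ_SS by lia.
    rewrite <- Z.mul_assoc, <- IH; ring.
Qed.

Lemma neg1_pow_sq n : ((-1) ^ Z.of_nat n * (-1) ^ Z.of_nat n = 1)%Z.
Proof. rewrite <- Z.pow_mul_l; apply Z.pow_1_l; lia. Qed.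

Lemma Zabs_neg1_pow n : Z.abs ((-1) ^ Z.of_nat n) = 1%Z.
Proof. rewrite Z.abs_pow; apply Z.pow_1_l; lia. Qed.

Lemma fib_cassini p :
  (fibZ (S p) * fibZ (S p) - fibZ p * fibZ (S (S p)) = (-1) ^ Z.of_nat p)%Z.
Proof.
  pose proof (fib_docagne p 1) as H.
  rewrite Nat.add_1_r in H; rewrite H; apply Z.mul_1_r.
Qed.

Lemma fib_add_le_mul i j : (fibZ (i + j) <= fibZ (S i) * fibZ (S j))%Z.
Proof.
  revert i.
  enough (H : forall i, (fibZ (i + j) <= fibZ (S i) * fibZ (S j))%Z /\
                        (fibZ (S i + j) <= fibZ (S (S i)) * fibZ (S j))%Z) by apply H.
  induction i as [|i [IH1 IH2]].
  - change (fibZ 1) with 1%Z; change (fibZ 2) with 1%Z; simpl (0 + j)%nat; simpl (1 + j)%nat.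
    pose proof (fibZ_le_S j); lia.
  - split; [exact IH2|].
    change (S (S i) + j)%nat with (S (S (i + j))); change (S i + j)%nat with (S (i + j)) in IH2.
    rewrite fibZ_SS, (fibZ_SS (S i)); pose proof (fibZ_S_pos j); nia.
Qed.

Lemma fib_bracket K t : (1 <= t < fibZ (S K))%Z ->
  exists i, (i < K)%nat /\ (fibZ (S i) <= t < fibZ (S (S i)))%Z.
Proof.
  induction K as [|K IH]; intros Ht; [unfold fibZ in Ht; simpl in Ht; lia|].
  destruct (Z_lt_le_dec t (fibZ (S K))) as [Hlt|Hge].
  - destruct IH as [i [Hi Hti]]; [lia|]; exists i; split; [lia|exact Hti].
  - exists K; split; lia.
Qed.

Open Scope Z_scope.

Lemma combination_abs_ge (A B P Q u v : Z) :
  0 <= A -> 0 <= P -> 0 <= Q -> 1 <= u * A + v * B < B ->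
  P <= Z.abs (u * P - v * Q).
Proof.
  intros HA HP HQ Hy.
  destruct (Z.lt_trichotomy u 0) as [Hu|[->|Hu]]; destruct (Z_le_gt_dec v 0) as [Hv|Hv];
    try nia.
Qed.

Lemma fib_gap i j y w : 1 <= y < fibZ (S (S i)) ->
  fibZ (S j) <= Z.abs (y * fibZ (i + S j) - w * fibZ (S (i + S j))).
Proof.
  intros Hy.
  set (s := (-1) ^ Z.of_nat i).
  set (A := fibZ (S i)); set (B := fibZ (S (S i))); set (C := fibZ i).
  set (m := (i + S j)%nat).
  assert (s_sq : s * s = 1) by apply neg1_pow_sq.
  assert (cassini : A * A - C * B = s) by apply fib_cassini.
  assert (e1 : A * fibZ m - C * fibZ (S m) = s * fibZ (S j)) by apply fib_docagne.
  assert (e2 : B * fibZ m - A * fibZ (S m) = - s * fibZ j).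
  { replace m with (S i + j)%nat by (unfold m; lia).
    unfold A, B; rewrite (fib_docagne (S i) j), Nat2Z.inj_succ, Z.pow_succ_r by lia.
    unfold s; ring. }
  set (u := s * (y * A - w * B)); set (v := s * (w * A - y * C)).
  assert (Hyuv : y = u * A + v * B).
  { transitivity (y * (s * s)); [rewrite s_sq; ring|].
    rewrite <- cassini at 2; unfold u, v; ring. }
  assert (Hwuv : w = u * C + v * A).
  { transitivity (w * (s * s)); [rewrite s_sq; ring|].
    rewrite <- cassini at 2; unfold u, v; ring. }
  replace (y * fibZ m - w * fibZ (S m)) with (s * (u * fibZ (S j) - v * fibZ j)).
  2:{ rewrite Hyuv, Hwuv at 1.
    transitivity (u * (A * fibZ m - C * fibZ (S m)) + v * (B * fibZ m - A * fibZ (S m)));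
      [rewrite e1, e2; ring | ring]. }
  rewrite Z.abs_mul; unfold s; rewrite Zabs_neg1_pow, Z.mul_1_l.
  apply (combination_abs_ge A B); try apply fibZ_nonneg.
  rewrite <- Hyuv; exact Hy.
Qed.

Lemma fib_product_gap p t w : t <> 0 -> Z.abs t < fibZ (S (S p)) ->
  fibZ p <= Z.abs t * Z.abs (t * fibZ (S p) - w * fibZ (S (S p))).
Proof.
  enough (Hpos : forall t w, 1 <= t < fibZ (S (S p)) ->
            fibZ p <= t * Z.abs (t * fibZ (S p) - w * fibZ (S (S p)))).
  { intros Ht0 Ht; destruct (Z_le_gt_dec 0 t).
    - rewrite Z.abs_eq by lia; apply Hpos; lia.
    - rewrite Z.abs_neq by lia.
      replace (t * fibZ (S p) - w * fibZ (S (S p)))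
        with (- (- t * fibZ (S p) - - w * fibZ (S (S p)))) by ring.
      rewrite Z.abs_opp; apply Hpos; lia. }
  clear t w; intros t w Ht.
  destruct (fib_bracket (S p) t Ht) as [i [Hi Hti]].
  set (j := (p - i)%nat).
  assert (Hgap := fib_gap i j t w ltac:(lia)).
  replace (i + S j)%nat with (S p) in Hgap by (unfold j; lia).
  assert (Hmul := fib_add_le_mul i j).
  replace (i + j)%nat with p in Hmul by (unfold j; lia).
  pose proof (fibZ_S_pos j); nia.
Qed.

Close Scope Z_scope.

Lemma dist_Z_attained r : exists j : Z, dist_Z r = Rabs (r - IZR j) /\ dist_Z r <= 1 / 2.
Proof.
  unfold dist_Z, frac; destruct (base_Int_part r) as [H1 H2].
  unfold Rmin; destruct (Rle_dec _ _).
  - exists (Int_part r); rewrite Rabs_right; lra.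
  - exists (Int_part r + 1)%Z; rewrite plus_IZR, Rabs_left; lra.
Qed.

Lemma dist_Z_near_fraction (q c x : Z) (theta d : R) :
  (2 <= q)%Z -> 0 <= d < 1 -> (1 <= x < q)%Z ->
  in_Icc (IZR c / IZR q) (d / IZR q ^ 2) theta ->
  exists t : Z, (q | c * x - t)%Z /\ (Z.abs t < q)%Z /\
    (1 - d) * Rabs (IZR t) <= IZR q * dist_Z (theta * IZR x).
Proof.
  intros Hq Hd Hx [Hlo Hhi].
  assert (Hqr : 2 <= IZR q) by (apply IZR_le; lia).
  assert (Hxr : 1 <= IZR x <= IZR q) by (split; apply IZR_le; lia).
  destruct (dist_Z_attained (theta * IZR x)) as [j [Ej Hhalf]].
  set (t := (c * x - j * q)%Z).
  set (e := (IZR q * theta - IZR c) * IZR x).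
  assert (He : 0 <= e <= d).
  { assert (0 <= IZR q * theta - IZR c <= d / IZR q).
    { split.
      - apply (Rmult_le_compat_l (IZR q)) in Hlo; [|lra].
        replace (IZR q * (IZR c / IZR q)) with (IZR c) in Hlo by (field; lra); lra.
      - apply (Rmult_le_compat_l (IZR q)) in Hhi; [|lra].
        replace (IZR q * (IZR c / IZR q + d / IZR q ^ 2)) with (IZR c + d / IZR q) in Hhi
          by (field; lra); lra. }
    assert (d / IZR q * IZR x <= d).
    { replace d with (d / IZR q * IZR q) at 2 by (field; lra).
      apply Rmult_le_compat_l; [apply Rdiv_le_0_compat|]; lra. }
    unfold e; split; [apply Rmult_le_pos|]; nra. }
  assert (Escaled : IZR q * dist_Z (theta * IZR x) = Rabs (IZR t + e)).
  { rewrite Ej, <- (Rabs_right (IZR q)) at 1 by lra; rewrite <- Rabs_mult.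
    f_equal; unfold t, e; rewrite minus_IZR, !mult_IZR; ring. }
  assert (Htri : Rabs (IZR t) - e <= Rabs (IZR t + e)).
  { replace (IZR t + e) with (IZR t - - e) by ring.
    rewrite <- (Rabs_right e) at 1 by lra; rewrite <- (Rabs_Ropp e); apply Rabs_triang_inv. }
  exists t; split; [|split].
  - exists j; unfold t; ring.
  - apply lt_IZR; rewrite abs_IZR.
    assert (IZR q * dist_Z (theta * IZR x) <= IZR q * (1 / 2)) by (apply Rmult_le_compat_l; lra).
    lra.
  - rewrite Escaled; destruct (Z.eq_dec t 0) as [Ht0|Ht0].
    + rewrite Ht0, Rabs_R0, Rmult_0_r; apply Rabs_pos.
    + assert (1 <= Rabs (IZR t)) by (rewrite <- abs_IZR; apply IZR_le; lia); nra.
Qed.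

Lemma prod_dist_fib_ge p a alpha beta d :
  (1 <= a < fibZ (S (S p)))%Z -> Z.gcd a (fibZ (S (S p))) = 1%Z -> 0 <= d < 1 ->
  in_Icc (IZR a / IZR (fibZ (S (S p)))) (d / IZR (fibZ (S (S p))) ^ 2) alpha ->
  in_Icc (frac (IZR (fibZ (S p)) * IZR a / IZR (fibZ (S (S p)))))
         (d / IZR (fibZ (S (S p))) ^ 2) beta ->
  forall x, (1 <= x < fib (S (S p)))%nat ->
  (1 - d) ^ 2 * IZR (fibZ p) <= IZR (fibZ (S (S p))) ^ 2 * prod_dist alpha beta x.
Proof.
  intros Ha Hgcd Hd Halpha Hbeta x Hx.
  set (q := fibZ (S (S p))) in *; set (m := fibZ (S p)) in *.
  assert (Hq : IZR q <> 0) by (apply not_0_IZR; lia).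
  set (k := Int_part (IZR m * IZR a / IZR q)).
  set (b := (m * a - k * q)%Z).
  replace (frac (IZR m * IZR a / IZR q)) with (IZR b / IZR q) in Hbeta
    by (unfold frac, b; fold k; rewrite minus_IZR, !mult_IZR; field; exact Hq).
  set (X := Z.of_nat x).
  assert (HX : (1 <= X < q)%Z) by (unfold X, q, fibZ; lia).
  destruct (dist_Z_near_fraction q a X alpha d ltac:(lia) Hd HX Halpha)
    as [t [[k1 Hk1] [Ht Halpha_t]]].
  destruct (dist_Z_near_fraction q b X beta d ltac:(lia) Hd HX Hbeta)
    as [s [[k2 Hk2] [_ Hbeta_s]]].
  assert (Ht0 : t <> 0%Z).
  { intros ->; assert (Hdiv : (q | X)%Z).
    { apply (Z.gauss q a X); [exists k1; lia | rewrite Z.gcd_comm; exact Hgcd]. }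
    apply Z.divide_pos_le in Hdiv; lia. }
  assert (Hts : (fibZ p <= Z.abs t * Z.abs s)%Z).
  { (* s = m t (mod q) because b = m a (mod q) *)
    replace s with (t * m - (k * X + k2 - m * k1) * q)%Z.
    - exact (fib_product_gap p t _ Ht0 Ht).
    - assert (Et : t = (a * X - k1 * q)%Z) by lia.
      assert (Es : s = (b * X - k2 * q)%Z) by lia.
      rewrite Et, Es; unfold b; ring. }
  apply (IZR_le _ _) in Hts; rewrite mult_IZR, !abs_IZR in Hts.
  unfold prod_dist; rewrite INR_IZR_INZ; fold X.
  replace (IZR q ^ 2 * (dist_Z (alpha * IZR X) * dist_Z (beta * IZR X)))
    with ((IZR q * dist_Z (alpha * IZR X)) * (IZR q * dist_Z (beta * IZR X))) by ring.
  apply Rle_trans with ((1 - d) * Rabs (IZR t) * ((1 - d) * Rabs (IZR s))).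
  - replace ((1 - d) * Rabs (IZR t) * ((1 - d) * Rabs (IZR s)))
      with ((1 - d) ^ 2 * (Rabs (IZR t) * Rabs (IZR s))) by ring.
    apply Rmult_le_compat_l; [apply pow2_ge_0 | exact Hts].
  - apply Rmult_le_compat; try exact Halpha_t; try exact Hbeta_s;
      apply Rmult_le_pos; try apply Rabs_pos; lra.
Qed.

Lemma min_prod_ge alpha beta Q L : (2 <= Q)%nat ->
  (forall x, (1 <= x < Q)%nat -> L <= prod_dist alpha beta x) ->
  L <= min_prod alpha beta Q.
Proof.
  intros HQ H; unfold min_prod.
  assert (Hseq : forall x, In x (seq 1 (Q - 1)) -> L <= prod_dist alpha beta x)
    by (intros x Hx; apply in_seq in Hx; apply H; lia).
  assert (H1 : L <= prod_dist alpha beta 1) by (apply H; lia).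
  clear H; induction (seq 1 (Q - 1)) as [|y l IH]; simpl; [exact H1|].
  apply Rmin_glb; [apply Hseq; left; reflexivity|].
  apply IH; intros x Hx; apply Hseq; right; exact Hx.
Qed.

Lemma scaled_min_prod_fib_ge p a alpha beta d :
  (1 <= a < fibZ (S (S p)))%Z -> Z.gcd a (fibZ (S (S p))) = 1%Z -> 0 <= d < 1 ->
  in_Icc (IZR a / IZR (fibZ (S (S p)))) (d / IZR (fibZ (S (S p))) ^ 2) alpha ->
  in_Icc (frac (IZR (fibZ (S p)) * IZR a / IZR (fibZ (S (S p)))))
         (d / IZR (fibZ (S (S p))) ^ 2) beta ->
  (1 - d) ^ 2 * (IZR (fibZ p) / IZR (fibZ (S (S p))))
    <= INR (fib (S (S p))) * min_prod alpha beta (fib (S (S p))).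
Proof.
  intros Ha Hgcd Hd Halpha Hbeta.
  rewrite INR_fib; set (q := IZR (fibZ (S (S p)))) in *.
  assert (Hq : 2 <= q) by (unfold q; apply IZR_le; lia).
  replace ((1 - d) ^ 2 * (IZR (fibZ p) / q)) with (q * ((1 - d) ^ 2 * IZR (fibZ p) / q ^ 2))
    by (field; lra).
  apply Rmult_le_compat_l; [lra|].
  apply min_prod_ge; [unfold fibZ in Ha; lia|].
  intros x Hx; apply (Rmult_le_reg_l (q ^ 2)); [nra|].
  replace (q ^ 2 * ((1 - d) ^ 2 * IZR (fibZ p) / q ^ 2)) with ((1 - d) ^ 2 * IZR (fibZ p))
    by (field; lra).
  exact (prod_dist_fib_ge p a alpha beta d Ha Hgcd Hd Halpha Hbeta x Hx).
Qed.

Lemma golden_const : 2 / (3 + sqrt 5) = (3 - sqrt 5) / 2.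
Proof.
  pose proof (sqrt_sqrt 5 ltac:(lra)); pose proof (sqrt_pos 5).
  field_simplify_eq; [nra | lra].
Qed.

Lemma ratio_ge_golden_const (x y : R) : 0 < y -> x * x - 3 * x * y + y * y <= 1 ->
  (3 - sqrt 5) / 2 - 1 / (y * y) <= x / y.
Proof.
  intros Hy Hq.
  pose proof (sqrt_sqrt 5 ltac:(lra)) as Hs; pose proof (sqrt_pos 5).
  set (r := x / y).
  assert (Hr : r * r - 3 * r + 1 <= 1 / (y * y)).
  { replace (r * r - 3 * r + 1) with ((x * x - 3 * x * y + y * y) / (y * y))
      by (unfold r; field; lra).
    apply Rmult_le_compat_r; [left; apply Rinv_0_lt_compat; nra | exact Hq]. }
  destruct (Rle_dec ((3 - sqrt 5) / 2) r) as [Hge|Hlt].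
  - assert (0 <= 1 / (y * y)) by (apply Rdiv_le_0_compat; nra); lra.
  - apply Rnot_le_lt in Hlt.
    assert (1 <= sqrt 5) by nra.
    assert (Hfac : r * r - 3 * r + 1 = ((3 - sqrt 5) / 2 - r) * ((3 + sqrt 5) / 2 - r)).
    { transitivity ((9 - sqrt 5 * sqrt 5) / 4 - 3 * r + r * r); [rewrite Hs|]; field. }
    assert (((3 - sqrt 5) / 2 - r) * 1 <= ((3 - sqrt 5) / 2 - r) * ((3 + sqrt 5) / 2 - r))
      by (apply Rmult_le_compat_l; lra).
    lra.
Qed.

Lemma fib_ratio_ge p :
  (3 - sqrt 5) / 2 - 1 / (IZR (fibZ (S (S p))) * IZR (fibZ (S (S p))))
    <= IZR (fibZ p) / IZR (fibZ (S (S p))).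
Proof.
  apply ratio_ge_golden_const; [apply IZR_lt; pose proof (fibZ_S_pos (S p)); lia|].
  rewrite <- !mult_IZR, <- minus_IZR, <- plus_IZR; apply IZR_le.
  pose proof (fib_cassini p) as Hc; rewrite fibZ_SS in *.
  assert (((-1) ^ Z.of_nat p <= 1)%Z)
    by (pose proof (Zabs_neg1_pow p); lia).
  nia.
Qed.

Lemma scaled_min_prod_fib_ge_golden p a alpha beta d :
  (1 <= a < fibZ (S (S p)))%Z -> Z.gcd a (fibZ (S (S p))) = 1%Z -> 0 <= d <= 1 / 2 ->
  in_Icc (IZR a / IZR (fibZ (S (S p)))) (d / IZR (fibZ (S (S p))) ^ 2) alpha ->
  in_Icc (frac (IZR (fibZ (S p)) * IZR a / IZR (fibZ (S (S p)))))
         (d / IZR (fibZ (S (S p))) ^ 2) beta ->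
  (3 - sqrt 5) / 2 - 2 * d - / INR (fib (S (S p)))
    <= INR (fib (S (S p))) * min_prod alpha beta (fib (S (S p))).
Proof.
  intros Ha Hgcd Hd Halpha Hbeta.
  eapply Rle_trans;
    [|apply (scaled_min_prod_fib_ge p a alpha beta d Ha Hgcd ltac:(lra) Halpha Hbeta)].
  pose proof (fib_ratio_ge p) as Hratio.
  rewrite INR_fib; set (q := IZR (fibZ (S (S p)))) in *; set (r := IZR (fibZ p) / q) in *.
  assert (Hq : 1 <= q) by (unfold q; apply IZR_le, fibZ_S_pos).
  assert (Hr : 0 <= r <= 1).
  { unfold r; split; [apply Rdiv_le_0_compat; [apply IZR_le, fibZ_nonneg | lra]|].
    apply (Rdiv_le_1 _ q); [lra|]; unfold q; apply IZR_le.
    rewrite !fibZ_SS; pose proof (fibZ_nonneg (S p)); pose proof (fibZ_nonneg p); lia. }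
  assert (Hinv : / (q * q) <= / q) by (apply Rinv_le_contravar; nra).
  unfold Rdiv in Hratio; rewrite Rmult_1_l in Hratio.
  assert ((1 - 2 * d) * r <= (1 - d) ^ 2 * r) by (apply Rmult_le_compat_r; nra).
  nra.
Qed.

Lemma LimSup_seq_ge_along (u : nat -> R) (phi : nat -> nat) (g : nat -> R) (c : R) :
  (forall k, (k <= phi k)%nat) ->
  (exists N, forall k, (N <= k)%nat -> g k <= u (phi k)) ->
  is_lim_seq g c ->
  Rbar_le c (LimSup_seq u).
Proof.
  intros Hphi [N Hg] Hlim; apply is_lim_seq_spec in Hlim.
  assert (Hfreq : forall eps : posreal, forall M, exists Q, (M <= Q)%nat /\ c - eps < u Q).
  { intros eps M; destruct (Hlim eps) as [N' HN'].
    exists (phi (N + N' + M)%nat); split; [specialize (Hphi (N + N' + M)%nat); lia|].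
    specialize (HN' (N + N' + M)%nat ltac:(lia)); specialize (Hg (N + N' + M)%nat ltac:(lia)).
    apply Rabs_lt_between' in HN'; lra. }
  destruct (ex_LimSup_seq u) as [l Hl]; rewrite (is_LimSup_seq_unique _ _ Hl).
  destruct l as [l| |]; simpl; [| exact I |].
  - destruct (Rle_dec c l) as [H|H]; [exact H|exfalso].
    assert (He : 0 < (c - l) / 2) by (apply Rnot_le_lt in H; lra).
    destruct (Hl (mkposreal _ He)) as [_ [N1 HN1]]; simpl in HN1.
    destruct (Hfreq (mkposreal _ He) N1) as [Q [HQ HuQ]]; specialize (HN1 Q HQ); simpl in HuQ; lra.
  - destruct (Hl (c - 1)) as [N1 HN1].
    destruct (Hfreq (mkposreal _ Rlt_0_1) N1) as [Q [HQ HuQ]]; specialize (HN1 Q HQ); simpl in HuQ; lra.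
Qed.

Lemma le_fib_strict_mono (n : nat -> nat) : (forall nu, (1 <= n nu)%nat) ->
  (forall nu, (n nu < n (S nu))%nat) -> forall nu, (nu <= fib (n nu))%nat.
Proof.
  intros H1 H2 nu.
  assert (Hn : (S nu <= n nu)%nat) by (induction nu; [apply H1 | specialize (H2 nu); lia]).
  destruct (n nu) as [|k]; [lia|]; pose proof (le_fib_S k); lia.
Qed.

Lemma is_lim_seq_inv_INR (v : nat -> nat) : (forall k, (k <= v k)%nat) ->
  is_lim_seq (fun k => / INR (v k)) 0.
Proof.
  intros Hv; replace (Finite 0) with (Rbar_inv p_infty) by reflexivity.
  apply is_lim_seq_inv; [|discriminate].
  apply (is_lim_seq_le_p_loc INR); [exists 0%nat; intros k _; apply le_INR, Hv|].
  apply is_lim_seq_INR.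
Qed.

Theorem theorem1
  (delta : nat -> R) (n : nat -> nat) (a : nat -> Z) (alpha beta : R)
  (hdelta_pos : forall nu, 0 < delta nu)
  (hdelta_lim : is_lim_seq delta 0)
  (hn_pos : forall nu, (1 <= n nu)%nat)
  (hn_incr : forall nu, (n nu < n (S nu))%nat)
  (ha_ge : forall nu, (1 <= a nu)%Z)
  (ha_lt : forall nu, (a nu < Z.of_nat (fib (n nu)))%Z)
  (ha_gcd : forall nu, Z.gcd (a nu) (Z.of_nat (fib (n nu))) = 1%Z)
  (hI : forall nu x,
      in_Icc (IZR (a (S nu)) / INR (fib (n (S nu))))
             (delta (S nu) / (INR (fib (n (S nu))))^2) x ->
      in_Icc (IZR (a nu) / INR (fib (n nu)))
             (delta nu / (INR (fib (n nu)))^2) x)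
  (hJ : forall nu x,
      in_Icc (frac (INR (fib (n (S nu) - 1)) * IZR (a (S nu)) / INR (fib (n (S nu)))))
             (delta (S nu) / (INR (fib (n (S nu))))^2) x ->
      in_Icc (frac (INR (fib (n nu - 1)) * IZR (a nu) / INR (fib (n nu))))
             (delta nu / (INR (fib (n nu)))^2) x)
  (halpha : forall x,
      (forall nu, in_Icc (IZR (a nu) / INR (fib (n nu)))
                         (delta nu / (INR (fib (n nu)))^2) x) <-> x = alpha)
  (hbeta : forall x,
      (forall nu, in_Icc (frac (INR (fib (n nu - 1)) * IZR (a nu) / INR (fib (n nu))))
                         (delta nu / (INR (fib (n nu)))^2) x) <-> x = beta) :
  Rbar_le (Finite (2 / (3 + sqrt 5)))
          (LimSup_seq (fun Q : nat => INR Q * min_prod alpha beta Q)).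
Proof.
  pose proof (le_fib_strict_mono n hn_pos hn_incr) as Hfib.
  rewrite golden_const.
  apply (LimSup_seq_ge_along _ (fun nu => fib (n nu))
           (fun nu => (3 - sqrt 5) / 2 - 2 * delta nu - / INR (fib (n nu)))).
  - exact Hfib.
  - apply is_lim_seq_spec in hdelta_lim.
    destruct (hdelta_lim (mkposreal (1 / 2) ltac:(lra))) as [N HN]; exists N; intros nu Hnu.
    specialize (HN nu Hnu); simpl in HN; rewrite Rminus_0_r, Rabs_right in HN
      by (left; apply hdelta_pos).
    pose proof (proj2 (halpha alpha) eq_refl nu) as Halpha.
    pose proof (proj2 (hbeta beta) eq_refl nu) as Hbeta.
    pose proof (ha_ge nu); pose proof (ha_lt nu); pose proof (ha_gcd nu); pose proof (hdelta_pos nu).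
    destruct (n nu) as [|[|p]]; [simpl in *; lia | simpl in *; lia |].
    replace (S (S p) - 1)%nat with (S p) in Hbeta by lia.
    rewrite !INR_fib in Halpha; rewrite !INR_fib in Hbeta.
    apply (scaled_min_prod_fib_ge_golden p (a nu)); unfold fibZ; try lia; try lra; assumption.
  - replace ((3 - sqrt 5) / 2) with ((3 - sqrt 5) / 2 - 2 * 0 - 0) at 1 by ring.
    apply is_lim_seq_minus'; [apply is_lim_seq_minus'; [apply is_lim_seq_const|] |].
    + apply (is_lim_seq_scal_l _ 2 0) in hdelta_lim; simpl in hdelta_lim; exact hdelta_lim.
    + exact (is_lim_seq_inv_INR _ Hfib).
Qed.
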